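(* Let $p$ be a prime and let $e\in\mathcal{B}(\mathbb{Q}_p(\mathbb{N}))$ be an idempotent. For $i\in\mathbb{N}$ let $e_i=e\delta_i\in\mathbb{Q}_p(\mathbb{N})$ be the $i$-th column of the matrix of $e$, and choose $n\in\mathbb{N}$ such that $e_i$ has all entries in $\mathbb{Z}_p$ for every $i>n$. Then there is an idempotent $f\in\mathcal{B}(\mathbb{Q}_p(\mathbb{N}))$ such that $fe=ef=f$, the image of $f$ is the finite-dimensional $\mathbb{Q}_p$-vector space $\sum_{i\in\mathbb{N},\,i\le n}\mathbb{Q}_p e_i$, and $e-f$ is an idempotent with $\|e-f\|\le1$.
   Context: $\mathbb{Q}_p(\mathbb{N})$ is the set of maps $\xi:\mathbb{N}\to\mathbb{Q}_p$ with $|\xi(i)|_p\le1$ for all but finitely many $i$, a $\mathbb{Z}_p$-module under coordinatewise operations, with the topology $\tau$ in which $A\subseteq\mathbb{Q}_p(\mathbb{N})$ is open iff for every finite $P\subseteq\mathbb{N}$ the set $A\cap\big(\prod_{i\in P}\mathbb{Q}_p\times\prod_{j\notin P}\mathbb{Z}_p\big)$ is open in the product topology. $\mathcal{B}(\mathbb{Q}_p(\mathbb{N}))$ is the algebra of $\tau$-continuous $\mathbb{Z}_p$-linear maps, with operator norm $\|T\|=\sup_{\|\xi\|\le1}\|T\xi\|$, $\|\xi\|=\max_i|\xi(i)|_p$. $\delta_i$ is the indicator function of $\{i\}$. *)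

From HB Require Import structures.
From mathcomp Require Import all_boot all_order all_algebra.
Set Implicit Arguments. Unset Strict Implicit. Unset Printing Implicit Defensive.
Import Order.TTheory GRing.Theory Num.Theory.
Local Open Scope ring_scope.

Definition padic_abs (p : nat) (q : rat) : rat :=
  if q == 0 then 0
  else (p%:R : rat) ^+ (logn p `|denq q|%N) / (p%:R : rat) ^+ (logn p `|numq q|%N).

(* "K together with nrm is (a model of) the field Q_p of p-adic numbers":
   nrm is a non-archimedean absolute value on K (values are rational,
   as every value of |.|_p is a power of p or 0), extending the p-adic
   absolute value of Q (embedded by ratr), K is complete for nrm and Q
   is dense in K.  This characterizes Q_p (the completion of Q for
   |.|_p) up to unique isometric isomorphism. *)
Record is_Qp (p : nat) (K : fieldType) (nrm : K -> rat) : Prop := IsQp {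
  Qp_nrm_ge0 : forall x, 0 <= nrm x;
  Qp_nrm_eq0 : forall x, nrm x = 0 <-> x = 0;
  Qp_nrmM : forall x y, nrm (x * y) = nrm x * nrm y;
  Qp_nrmD : forall x y, nrm (x + y) <= Num.max (nrm x) (nrm y);
  Qp_nrm_rat : forall q : rat, nrm (ratr q) = padic_abs p q;
  Qp_complete : forall u : nat -> K,
    (forall eps : rat, 0 < eps -> exists N, forall m n, (N <= m)%N -> (N <= n)%N ->
       nrm (u m - u n) < eps) ->
    exists l : K, forall eps : rat, 0 < eps -> exists N, forall n, (N <= n)%N ->
       nrm (u n - l) < eps;
  Qp_dense : forall (x : K) (eps : rat), 0 < eps ->
    exists q : rat, nrm (x - ratr q) < eps
}.

Section QpN.
Variables (K : fieldType) (nrm : K -> rat).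

Definition in_Zp (a : K) : Prop := nrm a <= 1.

Definition inQpN (xi : nat -> K) : Prop :=
  exists n : nat, forall i, (n < i)%N -> in_Zp (xi i).

Definition boxP (P : seq nat) (xi : nat -> K) : Prop :=
  forall j, j \notin P -> in_Zp (xi j).

(* A is tau-open: A is a subset of Q_p(N) and, for every finite P, A /\ boxP P
   is (relatively) open in boxP P for the product topology, i.e. every
   point of A /\ boxP P has a basic product neighbourhood (finitely many
   coordinates constrained) whose trace on boxP P lies in A. *)
Definition tau_open (A : (nat -> K) -> Prop) : Prop :=
  (forall xi, A xi -> inQpN xi) /\
  forall (P : seq nat) (xi : nat -> K), A xi -> boxP P xi ->
    exists (F : seq nat) (eps : rat), 0 < eps /\
      forall eta, boxP P eta -> (forall i, i \in F -> nrm (eta i - xi i) < eps) -> A eta.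

(* operators on Q_p(N) are represented by functions (nat -> K) -> (nat -> K);
   only their values on Q_p(N) matter. *)
Definition maps_QpN (T : (nat -> K) -> (nat -> K)) : Prop :=
  forall xi, inQpN xi -> inQpN (T xi).

Definition Zp_linear (T : (nat -> K) -> (nat -> K)) : Prop :=
  (forall xi eta, inQpN xi -> inQpN eta ->
     T (fun i => xi i + eta i) = (fun i => T xi i + T eta i)) /\
  (forall (a : K) xi, in_Zp a -> inQpN xi ->
     T (fun i => a * xi i) = (fun i => a * T xi i)).

Definition tau_continuous (T : (nat -> K) -> (nat -> K)) : Prop :=
  forall A, tau_open A -> tau_open (fun xi => inQpN xi /\ A (T xi)).

Definition inB (T : (nat -> K) -> (nat -> K)) : Prop :=
  [/\ maps_QpN T, Zp_linear T & tau_continuous T].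

Definition is_idempotent (T : (nat -> K) -> (nat -> K)) : Prop :=
  forall xi, inQpN xi -> T (T xi) = T xi.

(* ||xi|| = max_i |xi i|_p <= 1  iff every coordinate lies in Z_p *)
Definition vnorm_le1 (xi : nat -> K) : Prop := forall i, in_Zp (xi i).

Definition opnorm_le1 (T : (nat -> K) -> (nat -> K)) : Prop :=
  forall xi, inQpN xi -> vnorm_le1 xi -> vnorm_le1 (T xi).

End QpN.

Definition delta (K : fieldType) (i : nat) : nat -> K :=
  fun j => if j == i then 1 else 0.

Definition opsub (K : fieldType) (S T : (nat -> K) -> (nat -> K)) :
  (nat -> K) -> (nat -> K) := fun xi j => S xi j - T xi j.

From HB Require Import structures.
From mathcomp Require Import all_boot all_order all_algebra.
From Stdlib Require Import Classical FunctionalExtensionality.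
Import Order.TTheory GRing.Theory Num.Theory.
Local Open Scope ring_scope.
Set Implicit Arguments. Unset Strict Implicit. Unset Printing Implicit Defensive.

(* V := span(e_0, ..., e_n) is the image under e of the vectors supported on
   [0, n].  Gaussian elimination with full pivoting, always pivoting on a
   coordinate of maximal absolute value, gives a basis w_0, ..., w_(d-1) of V
   with entries in Z_p and pivot coordinates r_0, ..., r_(d-1) such that
   w_j(r_l) = [j = l].  Then P x := sum_j x(r_j) w_j is a projection onto V
   that reads finitely many coordinates through integral weights, and f := P e
   is the required idempotent.  For ||xi|| <= 1 write xi = xi' + xi'' with xi'
   supported on [0, n] and xi'' on (n, oo): (e - f) xi' = 0 since e xi' lies in
   V, while e xi'' is integral by tau-continuity of e (xi'' is a limit of
   finite combinations of the integral columns e_i, i > n, with coefficients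
   in Z_p), hence so is (e - f) xi'' = e xi'' - P e xi''.  Only the ultrametric
   inequality of |.|_p is used: neither the primality of p nor completeness
   plays a role. *)

Record nonarch_abs (K : fieldType) (nrm : K -> rat) : Prop := NonarchAbs {
  nrm_ge0 : forall x, 0 <= nrm x;
  nrm_eq0 : forall x, nrm x = 0 <-> x = 0;
  nrmM : forall x y, nrm (x * y) = nrm x * nrm y;
  nrmD_max : forall x y, nrm (x + y) <= Num.max (nrm x) (nrm y) }.

Lemma is_Qp_nonarch_abs p (K : fieldType) (nrm : K -> rat) :
  is_Qp p nrm -> nonarch_abs nrm.
Proof. by case=> *; split. Qed.

Section NonarchAbs.
Variables (K : fieldType) (nrm : K -> rat).
Hypothesis hnrm : nonarch_abs nrm.

Lemma nrm0 : nrm 0 = 0.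
Proof. exact/(nrm_eq0 hnrm). Qed.

Lemma nrm_gt0 x : x != 0 -> 0 < nrm x.
Proof.
move=> x0; rewrite lt_def (nrm_ge0 hnrm) andbT.
by apply: contraNneq x0 => /(nrm_eq0 hnrm) ->.
Qed.

Lemma nrm1 : nrm 1 = 1.
Proof.
apply: (mulfI (lt0r_neq0 (nrm_gt0 (oner_neq0 K)))).
by rewrite -(nrmM hnrm) !mulr1.
Qed.

Lemma nrmN x : nrm (- x) = nrm x.
Proof.
have nrmN1 : nrm (-1) = 1.
  apply/eqP; rewrite -sqrp_eq1 ?(nrm_ge0 hnrm) //.
  by rewrite expr2 -(nrmM hnrm) mulrNN mulr1 nrm1.
by rewrite -mulN1r (nrmM hnrm) nrmN1 mul1r.
Qed.

Lemma nrmV x : x != 0 -> nrm x^-1 = (nrm x)^-1.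
Proof.
move=> x0; have nx0 := lt0r_neq0 (nrm_gt0 x0).
by apply: (mulfI nx0); rewrite -(nrmM hnrm) !mulfV // nrm1.
Qed.

Lemma nrmD_le x y (b : rat) : nrm x <= b -> nrm y <= b -> nrm (x + y) <= b.
Proof. by move=> xb yb; apply: le_trans (nrmD_max hnrm x y) _; rewrite ge_max xb. Qed.

Lemma nrmD_lt x y (b : rat) : nrm x < b -> nrm y < b -> nrm (x + y) < b.
Proof. by move=> xb yb; apply: le_lt_trans (nrmD_max hnrm x y) _; rewrite gt_max xb. Qed.

Lemma nrmB_le x y (b : rat) : nrm x <= b -> nrm y <= b -> nrm (x - y) <= b.
Proof. by move=> xb yb; apply: nrmD_le; rewrite ?nrmN. Qed.

Lemma nrm_sum_lt (I : Type) (s : seq I) (P : pred I) (F : I -> K) (b : rat) :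
  0 < b -> (forall i, P i -> nrm (F i) < b) -> nrm (\sum_(i <- s | P i) F i) < b.
Proof.
move=> b0 Fb; apply: (big_ind (fun x => nrm x < b)) => //; first by rewrite nrm0.
by move=> x y; apply: nrmD_lt.
Qed.

Lemma in_Zp0 : in_Zp nrm 0.
Proof. by rewrite /in_Zp nrm0. Qed.

Lemma in_ZpB a b : in_Zp nrm a -> in_Zp nrm b -> in_Zp nrm (a - b).
Proof. exact: nrmB_le. Qed.

Lemma in_ZpM a b : in_Zp nrm a -> in_Zp nrm b -> in_Zp nrm (a * b).
Proof.
rewrite /in_Zp (nrmM hnrm) => a1 b1; rewrite -[1]mulr1.
by apply: ler_pM; rewrite ?(nrm_ge0 hnrm).
Qed.

Lemma in_Zp_sum (I : Type) (s : seq I) (P : pred I) (F : I -> K) :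
  (forall i, P i -> in_Zp nrm (F i)) -> in_Zp nrm (\sum_(i <- s | P i) F i).
Proof.
move=> FZ; apply: (big_ind (fun x => in_Zp nrm x)) => //; first exact: in_Zp0.
by move=> x y; apply: nrmD_le.
Qed.

End NonarchAbs.

Section FiniteCombinations.
Variable K : fieldType.

Definition column (T : (nat -> K) -> (nat -> K)) l := T (delta K l).

Definition trunc M (x : nat -> K) i := if (i < M)%N then x i else 0.

Lemma truncS M x : trunc M.+1 x = fun i => trunc M x i + x M * delta K M i.
Proof.
apply: functional_extensionality => i; rewrite /trunc /delta ltnS leq_eqVlt.
have [->|iM] := eqVneq i M; first by rewrite ltnn mulr1 add0r.
by rewrite mulr0 addr0.
Qed.

Definition span (E : nat -> nat -> K) k x :=
  exists c : nat -> K, x = fun i => \sum_(l < k) c l * E l i.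

Section Span.
Variables (E : nat -> nat -> K) (k : nat).

Lemma span0 : span E k (fun _ => 0).
Proof.
exists (fun _ => 0); apply: functional_extensionality => i.
by rewrite big1 // => l _; rewrite mul0r.
Qed.

Lemma spanD x y : span E k x -> span E k y -> span E k (fun i => x i + y i).
Proof.
move=> [c ->] [c' ->]; exists (fun l => c l + c' l).
by apply: functional_extensionality => i; rewrite -big_split; apply: eq_bigr => l _; rewrite mulrDl.
Qed.

Lemma spanB x y : span E k x -> span E k y -> span E k (fun i => x i - y i).
Proof.
move=> [c ->] [c' ->]; exists (fun l => c l - c' l).
by apply: functional_extensionality => i; rewrite -sumrB; apply: eq_bigr => l _; rewrite mulrBl.
Qed.

Lemma spanZ a x : span E k x -> span E k (fun i => a * x i).
Proof.
move=> [c ->]; exists (fun l => a * c l).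
by apply: functional_extensionality => i; rewrite mulr_sumr; apply: eq_bigr => l _; rewrite mulrA.
Qed.

Lemma span_sum d (a : nat -> K) (w : nat -> nat -> K) :
  (forall j, (j < d)%N -> span E k (w j)) -> span E k (fun i => \sum_(j < d) a j * w j i).
Proof.
elim: d => [|d IH] wV.
  have -> : (fun i => \sum_(j < 0) a j * w j i) = (fun _ => 0).
    by apply: functional_extensionality => i; rewrite big_ord0.
  exact: span0.
have -> : (fun i => \sum_(j < d.+1) a j * w j i) =
          (fun i => \sum_(j < d) a j * w j i + a d * w d i).
  by apply: functional_extensionality => i; rewrite big_ord_recr.
by apply: spanD; [apply: IH => j jd; apply: wV; apply: leqW | apply/spanZ/wV].
Qed.

Lemma span_widen x : span E k x -> span E k.+1 x.
Proof.
move=> [c ->]; exists (fun l => if (l < k)%N then c l else 0).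
apply: functional_extensionality => i; rewrite big_ord_recr /= ltnn mul0r addr0.
by apply: eq_bigr => l _; rewrite ltn_ord.
Qed.

Lemma span_mem : span E k.+1 (E k).
Proof.
exists (fun l => if l == k then 1 else 0).
apply: functional_extensionality => i; rewrite big_ord_recr /= eqxx mul1r.
by rewrite big1 ?add0r // => l _; rewrite ifN ?mul0r // neq_ltn ltn_ord.
Qed.

End Span.

Definition pivot_proj d (r : nat -> nat) (w : nat -> nat -> K) (x : nat -> K) : nat -> K :=
  fun i => \sum_(j < d) x (r j) * w j i.

Section PivotProjection.
Variables (d : nat) (r : nat -> nat) (w : nat -> nat -> K).

Lemma pivot_projD x y :
  pivot_proj d r w (fun i => x i + y i) = fun i => pivot_proj d r w x i + pivot_proj d r w y i.
Proof.
by apply: functional_extensionality => i; rewrite -big_split; apply: eq_bigr => j _; rewrite mulrDl.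
Qed.

Lemma pivot_projZ a x :
  pivot_proj d r w (fun i => a * x i) = fun i => a * pivot_proj d r w x i.
Proof.
by apply: functional_extensionality => i; rewrite mulr_sumr; apply: eq_bigr => j _; rewrite mulrA.
Qed.

Lemma pivot_proj_span E k x :
  (forall j, (j < d)%N -> span E k (w j)) -> span E k (pivot_proj d r w x).
Proof. exact: (span_sum (fun j => x (r j))). Qed.

Lemma pivot_proj_at_pivot x l :
  (forall j l, (j < d)%N -> (l < d)%N -> w j (r l) = if j == l then 1 else 0) ->
  (l < d)%N -> pivot_proj d r w x (r l) = x (r l).
Proof.
move=> wr ld; rewrite /pivot_proj (bigD1 (Ordinal ld)) //= wr // eqxx mulr1.
by rewrite big1 ?addr0 // => j jl; rewrite wr // ifN ?mulr0 //.
Qed.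

Definition ext_pivots r0 j := if j == d then r0 else r j.

Definition ext_weights r0 (u : nat -> K) j i :=
  if j == d then u i else w j i - w j r0 * u i.

Lemma pivot_proj_ext r0 u x :
  pivot_proj d.+1 (ext_pivots r0) (ext_weights r0 u) x =
  fun i => pivot_proj d r w x i - pivot_proj d r w x r0 * u i + x r0 * u i.
Proof.
apply: functional_extensionality => i.
rewrite /pivot_proj /ext_pivots /ext_weights big_ord_recr /= !eqxx; congr (_ + _).
rewrite mulr_suml -sumrB; apply: eq_bigr => j _.
by rewrite !ifN ?neq_ltn ?ltn_ord // mulrBr mulrA.
Qed.

End PivotProjection.

End FiniteCombinations.

Section SequenceSpace.
Variables (K : fieldType) (nrm : K -> rat).
Hypothesis hnrm : nonarch_abs nrm.

Lemma boxP_QpN P x : boxP nrm P x -> inQpN nrm x.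
Proof.
move=> xP; exists (\max_(i <- P) i) => i iP; apply: xP.
by apply: contraTN iP => iP; rewrite -leqNgt; apply: leq_bigmax_seq.
Qed.

Lemma QpN_boxP x : inQpN nrm x -> exists P, boxP nrm P x.
Proof.
move=> [m xm]; exists (iota 0 m.+1) => i.
by rewrite mem_iota add0n ltnS -ltnNge; apply: xm.
Qed.

Lemma finsupp_QpN M x : (forall i, (M <= i)%N -> x i = 0) -> inQpN nrm x.
Proof. by move=> x0; exists M => i /ltnW /x0 ->; apply: (in_Zp0 hnrm). Qed.

Lemma trunc_QpN M x : inQpN nrm (trunc M x).
Proof. by apply: (finsupp_QpN (M := M)) => i; rewrite /trunc leqNgt => /negbTE ->. Qed.

Lemma QpN_sub x y : inQpN nrm x -> inQpN nrm y -> inQpN nrm (fun i => x i - y i).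
Proof.
move=> [m xm] [m' ym]; exists (maxn m m') => i; rewrite gtn_max => /andP[im im'].
exact: (in_ZpB hnrm (xm _ im) (ym _ im')).
Qed.

Lemma exists_max_coord x i0 : (forall a, inQpN nrm (fun i => a * x i)) -> x i0 != 0 ->
  exists2 r0, x r0 != 0 & forall i, nrm (x i) <= nrm (x r0).
Proof.
move=> xQ xi0; have [m xm] := xQ (x i0)^-1.
pose M := maxn m i0.
have [/= r0 _ r0max] := arg_maxP (fun i : 'I_M.+1 => nrm (x i)) (isT : xpredT ord0).
have le_r0 i : (i <= M)%N -> nrm (x i) <= nrm (x r0).
  by move=> iM; apply: (r0max (Ordinal (iM : (i < M.+1)%N))).
have xmax i : nrm (x i) <= nrm (x r0).
  case: (leqP i M) => [/le_r0 //|]; rewrite gtn_max => /andP[/xm im _].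
  apply: le_trans (le_r0 _ (leq_maxr _ _)).
  move: im; rewrite /in_Zp (nrmM hnrm) (nrmV hnrm) //.
  by rewrite ler_pdivrMl ?mulr1 // (nrm_gt0 hnrm).
exists r0 => //; apply/negP => /eqP xr0.
by move: (xmax i0); rewrite xr0 (nrm0 hnrm) // leNgt (nrm_gt0 hnrm).
Qed.

Section ZpLinear.
Variable T : (nat -> K) -> (nat -> K).
Hypothesis hT : Zp_linear nrm T.

Lemma Zp_linearB x y : inQpN nrm x -> inQpN nrm y ->
  T (fun i => x i - y i) = fun i => T x i - T y i.
Proof.
move=> xQ yQ; have := hT.1 _ _ (QpN_sub xQ yQ) yQ.
have -> : (fun i => x i - y i + y i) = x by apply: functional_extensionality => i; rewrite subrK.
by move=> ->; apply: functional_extensionality => i; rewrite addrK.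
Qed.

Lemma Zp_linear0 : T (fun _ => 0) = fun _ => 0.
Proof.
have zQ : inQpN nrm (fun _ : nat => 0 : K) by apply: (finsupp_QpN (M := 0)).
have := Zp_linearB zQ zQ.
have -> : (fun _ : nat => (0 : K) - 0) = (fun _ => 0).
  by apply: functional_extensionality => i; rewrite subr0.
by move=> ->; apply: functional_extensionality => i; rewrite subrr.
Qed.

(* For |a| > 1 use Z_p-linearity at a^-1. *)
Lemma Zp_linearZ a x : inQpN nrm x -> inQpN nrm (fun i => a * x i) ->
  T (fun i => a * x i) = fun i => a * T x i.
Proof.
move=> xQ axQ; have [a1|a1] := leP (nrm a) 1; first exact: hT.2.
have a0 : a != 0 by apply: contraTneq a1 => ->; rewrite (nrm0 hnrm) // ltr10.
have ainv : in_Zp nrm a^-1.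
  by rewrite /in_Zp (nrmV hnrm) // invf_le1 ?(ltW a1) // (lt_trans ltr01 a1).
have := hT.2 _ _ ainv axQ.
have -> : (fun i => a^-1 * (a * x i)) = x by apply: functional_extensionality => i; rewrite mulKf.
by move=> ->; apply: functional_extensionality => i; rewrite mulVKf.
Qed.

Lemma Zp_linear_trunc M c :
  T (trunc M c) = fun i => \sum_(l < M) c l * column T l i.
Proof.
elim: M => [|M IH].
  have -> : trunc 0 c = fun _ => 0 by apply: functional_extensionality.
  by rewrite Zp_linear0; apply: functional_extensionality => i; rewrite big_ord0.
have deltaQ : inQpN nrm (fun i => c M * delta K M i).
  apply: (finsupp_QpN (M := M.+1)) => i iM.
  by rewrite /delta ifN ?mulr0 // neq_ltn iM orbT.
have dQ : inQpN nrm (delta K M).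
  apply: (finsupp_QpN (M := M.+1)) => i iM.
  by rewrite /delta ifN // neq_ltn iM orbT.
rewrite truncS (hT.1 _ _ (trunc_QpN M c) deltaQ) IH Zp_linearZ //.
by apply: functional_extensionality => i; rewrite big_ord_recr.
Qed.

End ZpLinear.

Lemma span_column T k x : Zp_linear nrm T ->
  span (column T) k x -> exists2 z, inQpN nrm z & x = T z.
Proof.
move=> Tl [c ->]; exists (trunc k c); first exact: trunc_QpN.
by rewrite Zp_linear_trunc.
Qed.

Lemma column_span_QpN T k x : maps_QpN nrm T -> Zp_linear nrm T ->
  span (column T) k x -> inQpN nrm x.
Proof. by move=> Tm Tl /(span_column Tl) [z zQ ->]; apply: Tm. Qed.

Lemma column_span_fixed T k x : inB nrm T -> is_idempotent nrm T ->
  span (column T) k x -> T x = x.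
Proof. by move=> [_ Tl _] Ti /(span_column Tl) [z zQ ->]; apply: Ti. Qed.

Lemma coord_ball_open j c eps :
  tau_open nrm (fun eta => inQpN nrm eta /\ nrm (eta j - c) < eps).
Proof.
split=> [xi [] //|P xi [xiQ xic] _].
exists [:: j], eps; split; first exact: le_lt_trans (nrm_ge0 hnrm _) xic.
move=> eta etaP etaF; split; first exact: boxP_QpN etaP.
rewrite -(subrKA (xi j)); exact: (nrmD_lt hnrm (etaF j (mem_head _ _)) xic).
Qed.

Lemma coord_notin_Zp_open j :
  tau_open nrm (fun eta => inQpN nrm eta /\ 1 < nrm (eta j)).
Proof.
split=> [xi [] //|P xi [xiQ xij] _].
exists [:: j], 1; split=> // eta etaP etaF; split; first exact: boxP_QpN etaP.
rewrite ltNge; apply: contraTN xij => etaj; rewrite -leNgt.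
rewrite -(subrK (eta j) (xi j)) -opprB; apply: (nrmD_le hnrm) => //.
by rewrite (nrmN hnrm) // ltW // etaF ?mem_head.
Qed.

Lemma tau_continuous_near T : maps_QpN nrm T -> tau_continuous nrm T ->
  forall P xi, inQpN nrm xi -> boxP nrm P xi ->
  forall rho : rat, 0 < rho -> forall s : seq nat,
  exists (F : seq nat) (eps : rat), 0 < eps /\ forall z, boxP nrm P z ->
    (forall i, i \in F -> nrm (z i - xi i) < eps) ->
    forall j, j \in s -> nrm (T z j - T xi j) < rho.
Proof.
move=> Tm Tc P xi xiQ xiP rho rho0; elim=> [|j s [F1 [e1 [e10 H1]]]].
  by exists [::], 1.
have [_ /(_ P xi) cont] := Tc _ (coord_ball_open j (T xi j) rho).
have [|F2 [e2 [e20 H2]]] := cont _ xiP.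
  by do !split; rewrite ?subrr ?(nrm0 hnrm) //; apply: Tm.
exists (F1 ++ F2), (Num.min e1 e2); split=> [|z zP zF j']; first by rewrite lt_min e10.
have zF1 i : i \in F1 -> nrm (z i - xi i) < e1.
  by move=> iF; have := zF i; rewrite mem_cat iF lt_min => /(_ isT) /andP[].
have zF2 i : i \in F2 -> nrm (z i - xi i) < e2.
  by move=> iF; have := zF i; rewrite mem_cat iF orbT lt_min => /(_ isT) /andP[].
rewrite inE => /predU1P[->|]; last exact: H1.
by have [_ []] := H2 z zP zF2.
Qed.

(* The truncations of xi stay in the unit box, agree with xi on any finite set
   of coordinates, and are mapped by T to combinations of integral columns. *)
Lemma inB_tail_integral T n : inB nrm T ->
  (forall i, (n < i)%N -> forall j, in_Zp nrm (T (delta K i) j)) ->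
  forall xi, vnorm_le1 nrm xi -> (forall i, (i <= n)%N -> xi i = 0) ->
  vnorm_le1 nrm (T xi).
Proof.
move=> [Tm Tl Tc] Tn xi xiZ xin j; rewrite /in_Zp leNgt; apply/negP => Txij.
have xiQ : inQpN nrm xi by exists 0%N.
have [_ /(_ [::] xi) cont] := Tc _ (coord_notin_Zp_open j).
have [F [eps [eps0 HF]]] := cont (conj xiQ (conj (Tm _ xiQ) Txij)) (fun i _ => xiZ i).
pose M := (\max_(i <- F) i).+1.
have truncZ : boxP nrm [::] (trunc M xi).
  by move=> i _; rewrite /trunc; case: ifP => _; [apply: xiZ | apply: (in_Zp0 hnrm)].
have truncF i : i \in F -> nrm (trunc M xi i - xi i) < eps.
  move=> iF; have iM : (i < M)%N by rewrite ltnS; apply: leq_bigmax_seq.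
  by rewrite /trunc iM subrr (nrm0 hnrm).
have [_ [_]] := HF _ truncZ truncF; rewrite Zp_linear_trunc // ltNge; apply/negP/negPn.
apply: (in_Zp_sum hnrm) => l _; have [ln|ln] := leqP l n.
  by rewrite xin // mul0r; apply: (in_Zp0 hnrm).
exact: (in_ZpM hnrm (xiZ l) (Tn _ ln j)).
Qed.

Section PivotContinuity.
Variables (d : nat) (r : nat -> nat) (w : nat -> nat -> K).
Hypothesis wZ : forall j i, (j < d)%N -> in_Zp nrm (w j i).

Lemma pivot_proj_integral x : vnorm_le1 nrm x -> vnorm_le1 nrm (pivot_proj d r w x).
Proof. by move=> xZ i; apply: (in_Zp_sum hnrm) => j _; apply: (in_ZpM hnrm (xZ _) (wZ _ _)). Qed.

Lemma pivot_proj_dist x y (rho : rat) : 0 < rho ->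
  (forall j, (j < d)%N -> nrm (x (r j) - y (r j)) < rho) ->
  forall i, nrm (pivot_proj d r w x i - pivot_proj d r w y i) < rho.
Proof.
move=> rho0 xy i; rewrite /pivot_proj -sumrB; apply: (nrm_sum_lt hnrm) => // j _.
rewrite -mulrBl (nrmM hnrm); apply: le_lt_trans (xy _ (ltn_ord j)).
by rewrite -[leRHS]mulr1 ler_wpM2l ?(nrm_ge0 hnrm) ?wZ.
Qed.

Lemma pivot_proj_comp_continuous T : maps_QpN nrm T -> tau_continuous nrm T ->
  tau_continuous nrm (pivot_proj d r w \o T).
Proof.
move=> Tm Tc A [AQ Aopen]; split=> [xi [] //|P xi [xiQ Axi] xiP].
set y := pivot_proj d r w (T xi).
have [Q yQ] := QpN_boxP (AQ _ Axi).
have [F [eps [eps0 HF]]] := Aopen Q y Axi yQ.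
pose rho := Num.min eps 1.
have rho0 : 0 < rho by rewrite lt_min eps0 ltr01.
have rho_eps : rho <= eps by rewrite ge_min lexx.
have rho1 : rho <= 1 by rewrite ge_min lexx orbT.
have [F' [eps' [eps'0 HF']]] :=
  tau_continuous_near Tm Tc xiQ xiP rho0 [seq r j | j <- iota 0 d].
exists F', eps'; split=> // z zP zF; split; first exact: boxP_QpN zP.
have near_y i : nrm (pivot_proj d r w (T z) i - y i) < rho.
  apply: pivot_proj_dist => // j jd; apply: HF' => //.
  by apply: map_f; rewrite mem_iota.
apply: HF => [i iQ|i _]; last exact: lt_le_trans (near_y i) rho_eps.
rewrite /in_Zp /= -(subrK (y i) (pivot_proj d r w (T z) i)) addrC.
by apply: (nrmD_le hnrm); [apply: yQ | apply: ltW (lt_le_trans (near_y i) rho1)].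
Qed.

End PivotContinuity.

Lemma Zp_linear_pivot_proj_comp d r w T : Zp_linear nrm T ->
  Zp_linear nrm (pivot_proj d r w \o T).
Proof.
move=> [TD TZ]; split=> [x y xQ yQ | a x aZ xQ] /=.
  by rewrite TD // pivot_projD.
by rewrite TZ // pivot_projZ.
Qed.

Lemma opsub_idempotent e f : maps_QpN nrm e -> Zp_linear nrm e ->
  maps_QpN nrm f -> Zp_linear nrm f ->
  is_idempotent nrm e -> is_idempotent nrm f ->
  (forall xi, inQpN nrm xi -> f (e xi) = f xi /\ e (f xi) = f xi) ->
  is_idempotent nrm (opsub e f).
Proof.
move=> em el fm fl ei fi ef xi xiQ; have [fe_f ef_f] := ef xi xiQ.
have [exQ fxQ] := (em _ xiQ, fm _ xiQ).
rewrite /opsub (Zp_linearB el exQ fxQ) (Zp_linearB fl exQ fxQ) ei // fi // fe_f ef_f.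
by apply: functional_extensionality => j; rewrite subrr subr0.
Qed.

End SequenceSpace.

Section Pivots.
Variables (K : fieldType) (nrm : K -> rat).
Hypothesis hnrm : nonarch_abs nrm.
Variable E : nat -> nat -> K.

Definition pivot_basis k d r w :=
  [/\ forall j, (j < d)%N -> span E k (w j),
      forall j i, (j < d)%N -> in_Zp nrm (w j i),
      forall j l, (j < d)%N -> (l < d)%N -> w j (r l) = if j == l then 1 else 0
    & forall l, (l < k)%N -> pivot_proj d r w (E l) = E l].

Lemma pivot_basis_fixed k d r w x :
  pivot_basis k d r w -> span E k x -> pivot_proj d r w x = x.
Proof.
move=> [_ _ _ wE] [c ->]; apply: functional_extensionality => i.
rewrite /pivot_proj; under eq_bigr do rewrite mulr_suml.
rewrite exchange_big /=; apply: eq_bigr => l _.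
rewrite -[in RHS](wE l (ltn_ord l)) /pivot_proj mulr_sumr.
by apply: eq_bigr => j _; rewrite mulrA.
Qed.

Lemma pivot_basis_keep k d r w :
  pivot_basis k d r w -> pivot_proj d r w (E k) = E k -> pivot_basis k.+1 d r w.
Proof.
move=> [wV wZ wr wE] wEk; split=> // [j jd|l]; first exact/span_widen/wV.
by rewrite ltnS leq_eqVlt => /predU1P[->|/wE].
Qed.

(* u is the residual of E k after projection, normalised at the new pivot r0. *)
Lemma pivot_basis_extend k d r w r0 u a :
  pivot_basis k d r w -> span E k.+1 u -> (forall i, in_Zp nrm (u i)) ->
  u r0 = 1 -> (forall l, (l < d)%N -> u (r l) = 0) ->
  (forall i, E k i - pivot_proj d r w (E k) i = a * u i) ->
  pivot_basis k.+1 d.+1 (ext_pivots d r r0) (ext_weights d w r0 u).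
Proof.
move=> [wV wZ wr wE] uV uZ ur0 ur uEk.
have lt_d j : (j < d.+1)%N -> j != d -> (j < d)%N.
  by move=> jd jnd; rewrite ltn_neqAle jnd -ltnS.
split.
- move=> j jd; rewrite /ext_weights; case: eqVneq => [//|jnd].
  by apply: spanB; [apply/span_widen/wV/lt_d | apply: spanZ].
- move=> j i jd; rewrite /ext_weights; case: eqVneq => [//|jnd].
  have wjZ := wZ _ _ (lt_d _ jd jnd).
  by apply: (in_ZpB hnrm (wjZ i)); apply: (in_ZpM hnrm (wjZ r0)).
- move=> j l jd ld; rewrite /ext_weights /ext_pivots.
  case: (eqVneq j d) => [jd'|jnd]; case: (eqVneq l d) => [ld'|lnd].
  + by rewrite ur0 jd' ld' eqxx.
  + by rewrite ur ?lt_d // jd' eq_sym (negbTE lnd).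
  + by rewrite ur0 mulr1 subrr ld' (negbTE jnd).
  + by rewrite ur ?lt_d // mulr0 subr0 wr ?lt_d.
- move=> l; rewrite pivot_proj_ext ltnS leq_eqVlt => /predU1P[->|/wE ->].
    have Ek i : E k i = pivot_proj d r w (E k) i + a * u i by rewrite -uEk subrKC.
    apply: functional_extensionality => i.
    by rewrite (Ek i) (Ek r0) ur0 mulr1 mulrDl addrA subrK.
  by apply: functional_extensionality => i; rewrite subrK.
Qed.

Hypothesis span_QpN : forall k x, span E k x -> inQpN nrm x.

Lemma pivot_basis_step k d r w :
  pivot_basis k d r w -> exists d' r' w', pivot_basis k.+1 d' r' w'.
Proof.
move=> wB; have [wV wZ wr _] := wB.
pose v := fun i => E k i - pivot_proj d r w (E k) i.
have vV : span E k.+1 v.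
  by apply: spanB (span_mem _ _) _; apply: pivot_proj_span => j /wV /span_widen.
have [v0|/not_all_ex_not [i0 /eqP vi0]] := classic (forall i, v i = 0).
  exists d, r, w; apply: pivot_basis_keep => //.
  apply: functional_extensionality => i.
  by apply/esym/eqP; rewrite -subr_eq0; apply/eqP/v0.
have [r0 vr0 vmax] := exists_max_coord hnrm (fun a => span_QpN (spanZ a vV)) vi0.
exists d.+1, (ext_pivots d r r0), (ext_weights d w r0 (fun i => (v r0)^-1 * v i)).
apply: (pivot_basis_extend (a := v r0) wB).
- exact: spanZ.
- move=> i; rewrite /in_Zp (nrmM hnrm) (nrmV hnrm) //.
  by rewrite ler_pdivrMl ?mulr1 ?(nrm_gt0 hnrm).
- exact: mulVf.
- by move=> l ld; rewrite /v pivot_proj_at_pivot // subrr mulr0.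
- by move=> i; rewrite mulVKf.
Qed.

Lemma exists_pivot_basis k : exists d r w, pivot_basis k d r w.
Proof.
elim: k => [|k [d [r [w /pivot_basis_step //]]]].
by exists 0%N, (fun _ => 0%N), (fun _ _ => 0); split.
Qed.

End Pivots.

Section ColumnProjection.
Variables (K : fieldType) (nrm : K -> rat).
Hypothesis hnrm : nonarch_abs nrm.
Variables (e : (nat -> K) -> (nat -> K)) (n d : nat) (r : nat -> nat) (w : nat -> nat -> K).
Hypotheses (heB : inB nrm e) (he : is_idempotent nrm e).
Hypothesis hw : pivot_basis nrm (column e) n.+1 d r w.
Hypothesis hn : forall i, (n < i)%N -> forall j, in_Zp nrm (e (delta K i) j).

Local Notation f := (pivot_proj d r w \o e).

Lemma column_proj_span xi : span (column e) n.+1 (f xi).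
Proof. by have [wV _ _ _] := hw; apply: pivot_proj_span. Qed.

Lemma column_proj_inB : inB nrm f.
Proof.
have [em el ec] := heB; have [_ wZ _ _] := hw.
split; last exact: pivot_proj_comp_continuous.
- by move=> xi _; apply: (column_span_QpN hnrm em el (column_proj_span xi)).
- exact: Zp_linear_pivot_proj_comp.
Qed.

Lemma column_proj_absorb xi : inQpN nrm xi -> f (e xi) = f xi /\ e (f xi) = f xi.
Proof. by move=> xiQ; rewrite /= he // (column_span_fixed hnrm heB he (column_proj_span xi)). Qed.

Lemma column_proj_idempotent : is_idempotent nrm f.
Proof.
move=> xi xiQ; rewrite /= (column_span_fixed hnrm heB he (column_proj_span xi)).
exact: (pivot_basis_fixed hw (column_proj_span xi)).
Qed.

Lemma column_proj_range eta :
  (exists xi, inQpN nrm xi /\ f xi = eta) <-> span (column e) n.+1 eta.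
Proof.
split=> [[xi [_ <-]]|etaV]; first exact: column_proj_span.
have [_ el _] := heB; have [z zQ etaE] := span_column hnrm el etaV.
by exists z; split=> //=; rewrite -etaE (pivot_basis_fixed hw).
Qed.

Lemma column_proj_sub_opnorm_le1 : opnorm_le1 nrm (opsub e f).
Proof.
have [_ el _] := heB; have [_ wZ _ _] := hw.
move=> xi xiQ xiZ j.
pose hi := fun i => xi i - trunc n.+1 xi i.
have hiZ : vnorm_le1 nrm hi.
  move=> i; rewrite /hi /trunc; case: ifP => _; last by rewrite subr0.
  by rewrite subrr; apply: (in_Zp0 hnrm).
have hi_low i : (i <= n)%N -> hi i = 0 by rewrite /hi /trunc ltnS => ->; rewrite subrr.
have loV : span (column e) n.+1 (e (trunc n.+1 xi)) by rewrite (Zp_linear_trunc hnrm el); exists xi.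
have exi : e xi = fun i => e (trunc n.+1 xi) i + e hi i.
  rewrite /hi (Zp_linearB hnrm el xiQ (trunc_QpN hnrm _ _)).
  by apply: functional_extensionality => i; rewrite subrKC.
have ehiZ := inB_tail_integral hnrm heB hn hiZ hi_low.
rewrite /opsub /= exi pivot_projD /= (pivot_basis_fixed hw loV) opprD addrACA subrr add0r.
exact: (in_ZpB hnrm (ehiZ j) (pivot_proj_integral hnrm r wZ ehiZ j)).
Qed.

End ColumnProjection.

Unset Implicit Arguments.
Set Strict Implicit.

Theorem lemma3p13 (p : nat) (K : fieldType) (nrm : K -> rat)
  (hp : prime p) (hK : is_Qp p nrm)
  (e : (nat -> K) -> (nat -> K)) (heB : inB nrm e) (he : is_idempotent nrm e)
  (n : nat)
  (hn : forall i, (n < i)%N -> forall j, in_Zp nrm (e (delta K i) j)) :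
  exists f : (nat -> K) -> (nat -> K),
    [/\ inB nrm f /\ is_idempotent nrm f,
        (forall xi, inQpN nrm xi -> f (e xi) = f xi /\ e (f xi) = f xi),
        (forall eta : nat -> K,
           (exists xi, inQpN nrm xi /\ f xi = eta) <->
           (exists c : nat -> K,
              eta = (fun j => \sum_(i < n.+1) c i * e (delta K i) j))),
        is_idempotent nrm (opsub e f) &
        opnorm_le1 nrm (opsub e f)].
Proof.
have hnrm := is_Qp_nonarch_abs hK; have [em el _] := heB.
have [d [r [w hw]]] :=
  exists_pivot_basis hnrm (fun k x => column_span_QpN hnrm em el) n.+1.
have fB := column_proj_inB hnrm heB hw; have [fm fl _] := fB.
have absorb := column_proj_absorb hnrm heB he hw.
exists (pivot_proj d r w \o e); split.
- by split; last exact: (column_proj_idempotent hnrm heB he hw).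
- exact: absorb.
- exact: (column_proj_range hnrm heB hw).
- exact: (opsub_idempotent hnrm em el fm fl he (column_proj_idempotent hnrm heB he hw) absorb).
- exact: (column_proj_sub_opnorm_le1 hnrm heB hw hn).
Qed.
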